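(* Let $(X,d)$ be a metric space and let $\mathcal{B}$ be a bornology on $X$ with a closed base $\mathcal{B}_0$. Let $\tau_F$ and $\tau_F^s$ be the finest locally convex topologies of the extended locally convex spaces $(C(X),\tau_{\mathcal{B}})$ and $(C(X),\tau_{\mathcal{B}}^s)$, respectively. Then the following are equivalent: (i) $\tau_F=\tau_F^s$; (ii) $\tau_{\mathcal{B}}=\tau_{\mathcal{B}}^s$; (iii) $\mathcal{B}$ is shielded from closed sets.
   Context: $C(X)$ is the vector space of continuous real-valued functions on $(X,d)$. A bornology on $X$ is a family of nonempty subsets of $X$ covering $X$, closed under finite unions and under taking nonempty subsets; a base $\mathcal{B}_0$ is a subfamily cofinal under inclusion, and it is a closed base if its members are closed. $\tau_{\mathcal{B}}$ (uniform convergence on $\mathcal{B}$) is the topology on $C(X)$ induced by the extended seminorms $\rho_B(f)=\sup_{x\in B}|f(x)|$, $B\in\mathcal{B}_0$; $\tau_{\mathcal{B}}^s$ (strong uniform convergence on $\mathcal{B}$) is induced by the extended seminorms $\rho^s_B(f)=\inf_{\delta>0}\sup_{x\in B^\delta}|f(x)|$, $B\in\mathcal{B}_0$, where $B^\delta=\{x\in X: d(x,B)<\delta\}$. (A topology induced by a family $\{\rho_i\}$ of extended seminorms $\rho:V\to[0,\infty]$, i.e. absolutely homogeneous and subadditive maps, has as neighborhood base at $v_0$ the sets $\{v:\max_{i\in J}\rho_i(v-v_0)<\varepsilon\}$, $J$ finite; such a space is an extended locally convex space.) The finest locally convex topology of an extended locally convex space $(V,\tau)$ is the locally convex topology $\tau_F\subseteq\tau$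 (induced by finite-valued seminorms) such that every locally convex topology $\sigma\subseteq\tau$ on $V$ satisfies $\sigma\subseteq\tau_F$. For nonempty $A\subseteq X$, a superset $A_1\supseteq A$ is a shield for $A$ if for every closed $C\subseteq X$ with $C\cap A_1=\emptyset$ there is $\delta>0$ with $C\cap A^\delta=\emptyset$. $\mathcal{B}$ is shielded from closed sets if each $B\in\mathcal{B}$ has a shield belonging to $\mathcal{B}$. *)

From Stdlib Require List.
From mathcomp Require Import all_boot all_order all_algebra.
From mathcomp Require Import all_classical all_reals all_analysis.
Set Implicit Arguments. Unset Strict Implicit. Unset Printing Implicit Defensive.
Import Order.TTheory GRing.Theory Num.Theory.
Local Open Scope classical_set_scope.
Local Open Scope ring_scope.

Section Defs.
Variables (R : realType) (X : Type) (d : X -> X -> R).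

Definition is_metric : Prop :=
  [/\ forall x y, 0 <= d x y,
      forall x y, d x y = 0 <-> x = y,
      forall x y, d x y = d y x
    & forall x y z, d x z <= d x y + d y z].

Definition dcontinuous (f : X -> R) : Prop :=
  forall x (e : R), 0 < e -> exists2 del : R, 0 < del &
    forall y, d x y < del -> `|f y - f x| < e.

Definition CX : set (X -> R) := [set f | dcontinuous f].

Definition dclosed (A : set X) : Prop :=
  forall x, (forall del : R, 0 < del -> exists2 a, A a & d x a < del) -> A x.

(* B^delta = {x : d(x,B) < delta}; d(x,B) < delta iff some b in B has d(x,b) < delta *)
Definition enlarge (B : set X) (del : R) : set X :=
  [set x | exists2 b, B b & d x b < del].

Definition bornology (Bor : set (set X)) : Prop :=
  [/\ forall B, Bor B -> B !=set0,
      forall x, exists2 B, Bor B & B x,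
      forall A B, Bor A -> Bor B -> Bor (A `|` B)
    & forall A B, Bor B -> A `<=` B -> A !=set0 -> Bor A].

Definition closed_base (Bor B0 : set (set X)) : Prop :=
  [/\ B0 `<=` Bor,
      forall B, Bor B -> exists2 B', B0 B' & B `<=` B'
    & forall B, B0 B -> dclosed B].

Definition rho (B : set X) (f : X -> R) : \bar R :=
  ereal_sup [set (`|f x|)%:E | x in B].

Definition rho_s (B : set X) (f : X -> R) : \bar R :=
  ereal_inf [set rho (enlarge B del) f | del in [set del : R | 0 < del]].

Definition induced_top (N : set ((X -> R) -> \bar R)) : set (set (X -> R)) :=
  [set U | U `<=` CX /\
    forall f0, U f0 -> exists J : seq ((X -> R) -> \bar R),
      (forall p, List.In p J -> N p) /\
      exists2 e : R, 0 < e &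
        forall g, CX g -> (forall p, List.In p J -> (p (fun x => (g x - f0 x)%R) < e%:E)%E) -> U g].

Definition seminorm (p : (X -> R) -> R) : Prop :=
  (forall (a : R) f, CX f -> p (fun x => a * f x) = `|a| * p f) /\
  (forall f g, CX f -> CX g -> p (fun x => f x + g x) <= p f + p g).

Definition locally_convex (T : set (set (X -> R))) : Prop :=
  exists P : set ((X -> R) -> R), (forall p, P p -> seminorm p) /\
    T = induced_top [set (fun f => (p f)%:E) | p in P].

Definition finest_lc (T TF : set (set (X -> R))) : Prop :=
  [/\ locally_convex TF, TF `<=` T &
      forall S, locally_convex S -> S `<=` T -> S `<=` TF].

Definition tau_B (B0 : set (set X)) := induced_top [set rho B | B in B0].
Definition tau_Bs (B0 : set (set X)) := induced_top [set rho_s B | B in B0].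

Definition is_shield (A A1 : set X) : Prop :=
  A `<=` A1 /\ forall C, dclosed C -> C `&` A1 = set0 ->
    exists2 del : R, 0 < del & C `&` enlarge A del = set0.

Definition shielded_from_closed (Bor : set (set X)) : Prop :=
  forall B, Bor B -> exists2 A1, Bor A1 & is_shield B A1.

End Defs.

From mathcomp Require Import all_boot all_order all_algebra.
From mathcomp Require Import all_classical all_reals all_analysis.
From mathcomp Require Import lra.
Set Implicit Arguments. Unset Strict Implicit. Unset Printing Implicit Defensive.
Import Order.TTheory GRing.Theory Num.Theory.
Import numFieldNormedType.Exports.
Local Open Scope classical_set_scope.
Local Open Scope ring_scope.

(* [tau_B] is always coarser than [tau_B^s], since [rho_B <= rho^s_B].  A
   shield [A1] of [B] gives the converse: if [|f| <= r < e] on [A1], the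
   shield property applied to the closed set [{|f| >= (r + e) / 2}] bounds
   [|f|] by [(r + e) / 2] on some [B^delta].
   If some [B1] in [B0] has no shield, a basic [tau_B]-neighbourhood of [0]
   only constrains functions on a closed [A] in [B] containing [B1]; as [A]
   is no shield, some closed [C] disjoint from [A] meets every [B1^delta],
   and an Urysohn function that is [0] on [A] and [1] on [C] lies in that
   neighbourhood while its [rho^s_B1] is [1].  Hence the unit ball of
   [rho^s_B1] is not [tau_B]-open, and neither is the unit ball of the finite
   seminorm [rho^s_B1 o pi], where [pi] is a linear projection (Zorn's lemma)
   of [C(X)] onto the subspace on which [rho^s_B1] is finite; that ball is
   open in [tau_F^s] but not in [tau_F], which is coarser than [tau_B]. *)

Section LinearProjection.
Variables (K : fieldType) (V : lmodType K).

Definition lin_closed (S : set V) := forall a u v, S u -> S v -> S (a *: u + v).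

Variables (W F : set V).
Hypotheses (W_lin : lin_closed W) (F_lin : lin_closed F) (F0 : F 0)
  (FW : F `<=` W).

Let admissible (G : set V) :=
  [/\ G `<=` W, lin_closed G & forall g, G g -> F g -> g = 0].

Let admissible_setU0 G : admissible G -> admissible (G `|` [set 0]).
Proof.
case=> GW G_lin GF; split.
- by move=> v [/GW|->] //; exact: FW.
- move=> a u v [Gu|->] [Gv|->]; last by right; rewrite scaler0 addr0.
  + by left; exact: G_lin.
  + by left; rewrite addr0 -[a in a *: u](subrK 1) scalerDl scale1r; exact: G_lin.
  + by left; rewrite scaler0 add0r.
- by move=> g [/GF|->].
Qed.

Let exists_max_admissible :
  exists G, [/\ admissible G, G 0 & forall G', G `<` G' -> ~ admissible G'].
Proof.
have [G [adG maxG]] : exists G, admissible G /\ forall G', G `<` G' -> ~ admissible G'.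
  apply: Zorn_bigcup => Fam FamP Fam_chain; split.
  - by move=> v [G FG Gv]; have [GW _ _] := FamP G FG; exact: GW.
  - move=> a u v [G1 FG1 G1u] [G2 FG2 G2v].
    have [G1G2|G2G1] := Fam_chain _ _ FG1 FG2.
    + have [_ G2_lin _] := FamP _ FG2.
      by exists G2 => //; apply: G2_lin => //; exact: G1G2.
    + have [_ G1_lin _] := FamP _ FG1.
      by exists G1 => //; apply: G1_lin => //; exact: G2G1.
  - by move=> g [G FG Gg]; have [_ _ GF] := FamP _ FG; exact: GF.
exists G; split => //; apply: contrapT => nG0.
apply: (maxG (G `|` [set 0])); last exact: admissible_setU0.
by split=> [v Gv|sub]; [left | apply/nG0/sub; right].
Qed.

Let max_admissible_decomp G : admissible G -> G 0 ->
  (forall G', G `<` G' -> ~ admissible G') ->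
  forall v, W v -> exists2 h, F h & G (v - h).
Proof.
move=> [GW G_lin GF] G0 maxG v Wv; apply: contrapT => nodec.
pose G' := [set g + a *: v | g in G & a in [set: K]].
apply: (maxG G'); [split | rewrite /admissible; split].
- by move=> g Gg; exists g => //; exists 0 => //; rewrite scale0r addr0.
- move=> G'G; apply: nodec; exists 0 => //; rewrite subr0; apply: G'G.
  by exists 0 => //; exists 1 => //; rewrite add0r scale1r.
- by move=> _ [g /GW Wg [a _ <-]]; rewrite addrC; exact: W_lin.
- move=> c _ _ [g1 Gg1 [a1 _ <-]] [g2 Gg2 [a2 _ <-]].
  exists (c *: g1 + g2); first exact: G_lin.
  exists (c * a1 + a2) => //.
  by rewrite scalerDl -scalerA scalerDr addrACA.
- move=> _ [g Gg [a _ <-]]; have [->|a0] := eqVneq a 0.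
    by rewrite scale0r addr0; exact: GF.
  move=> Fga; exfalso; apply: nodec.
  exists (a^-1 *: (g + a *: v) + 0); first exact: F_lin.
  rewrite addr0 scalerDr scalerA mulVf // scale1r opprD addrA addrAC subrr add0r.
  by rewrite -scaleNr -[X in G X]addr0; exact: G_lin.
Qed.

Lemma linear_projection : exists pr : V -> V,
  [/\ forall v, W v -> F (pr v), forall v, F v -> pr v = v &
      forall a u v, W u -> W v -> pr (a *: u + v) = a *: pr u + pr v].
Proof.
have [G [adG G0 maxG]] := exists_max_admissible.
have [GW G_lin GF] := adG; have decomp := max_admissible_decomp adG G0 maxG.
have [pr pr_dec] : {pr : V -> V & forall v, W v -> F (pr v) /\ G (v - pr v)}.
  apply: (@choice _ _ (fun v h => W v -> F h /\ G (v - h))) => v.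
  have [/decomp [h Fh Gh]|nWv] := pselect (W v); first by exists h.
  by exists 0.
have pr_unique v h : W v -> F h -> G (v - h) -> pr v = h.
  move=> Wv Fh Gh; have [Fpr Gpr] := pr_dec v Wv.
  apply/eqP; rewrite -subr_eq0; apply/eqP/GF.
    have -> : pr v - h = (-1) *: (v - pr v) + (v - h).
      by rewrite scaleN1r opprB addrA subrK.
    exact: G_lin.
  by rewrite addrC -scaleN1r; exact: F_lin.
exists pr; split.
- by move=> v /pr_dec [].
- by move=> v Fv; apply: pr_unique => //; [exact: FW | rewrite subrr].
- move=> a u v Wu Wv; have [Fu Gu] := pr_dec u Wu; have [Fv Gv] := pr_dec v Wv.
  apply: pr_unique; [exact: W_lin | exact: F_lin |].
  by rewrite opprD addrACA -scalerBr; exact: G_lin.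
Qed.

End LinearProjection.

Section ExtendedSeminorms.
Variables (R : realType) (X : Type) (d : X -> X -> R).
Implicit Types (B : set X) (f g k : X -> R).

Lemma rho_ltP B f (e : R) :
  (rho B f < e%:E)%E <-> exists2 r : R, r < e & forall x, B x -> `|f x| <= r.
Proof.
split=> [|[r re Hr]].
- have ub x : B x -> ((`|f x|)%:E <= rho B f)%E.
    by move=> Bx; apply: ereal_sup_ubound; exists x.
  case: (rho B f) ub => [s ub|//|ub _].
  + by rewrite lte_fin => se; exists s => // x /ub; rewrite lee_fin.
  + by exists (e - 1) => [|x /ub//]; rewrite gtrBl.
- apply: (@le_lt_trans _ _ r%:E); last by rewrite lte_fin.
  by apply: ge_ereal_sup => _ [x Bx <-]; rewrite lee_fin; exact: Hr.
Qed.

Lemma rho_s_ltP B f (e : R) :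
  (rho_s d B f < e%:E)%E <-> exists2 del : R, 0 < del &
    exists2 r : R, r < e & forall x, enlarge d B del x -> `|f x| <= r.
Proof.
split.
- by case/ereal_inf_ltP => _ [del del_gt0 <-] /rho_ltP; exists del.
- case=> del del_gt0 /rho_ltP H; apply: le_lt_trans H.
  by apply: ereal_inf_lbound; exists del.
Qed.

Lemma le_enlarge B (a b : R) : a <= b -> enlarge d B a `<=` enlarge d B b.
Proof. by move=> ab x [y By dxy]; exists y => //; exact: lt_le_trans ab. Qed.

Lemma enlargeS B B' (del : R) : B `<=` B' -> enlarge d B del `<=` enlarge d B' del.
Proof. by move=> BB' x [y /BB' B'y dxy]; exists y. Qed.

Lemma rho_s_lt_of_bounded B k (r e : R) :
  (forall x, `|k x| <= r) -> r < e -> (rho_s d B k < e%:E)%E.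
Proof. by move=> kr re; apply/rho_s_ltP; exists 1 => //; exists r. Qed.

Lemma rho_s_ltD B f g (r s : R) :
  (rho_s d B f < r%:E)%E -> (rho_s d B g < s%:E)%E ->
  (rho_s d B (fun x => f x + g x)%R < (r + s)%R%:E)%E.
Proof.
move=> /rho_s_ltP[d1 d1_gt0 [r1 r1r H1]] /rho_s_ltP[d2 d2_gt0 [s1 s1s H2]].
apply/rho_s_ltP; exists (Num.min d1 d2); first by rewrite lt_min d1_gt0.
exists (r1 + s1); first exact: ltrD.
move=> x Ex; apply: le_trans (ler_normD _ _) _.
by apply: lerD; [apply: H1 | apply: H2]; apply: le_enlarge Ex; rewrite ge_min lexx ?orbT.
Qed.

Lemma rho_s_ltZ B a f (r : R) : a != 0 ->
  (rho_s d B f < r%:E)%E -> (rho_s d B (fun x => a * f x)%R < (`|a| * r)%R%:E)%E.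
Proof.
move=> a0 /rho_s_ltP[del del_gt0 [r1 r1r H]]; apply/rho_s_ltP; exists del => //.
exists (`|a| * r1); first by rewrite ltr_pM2l ?normr_gt0.
by move=> x /H; rewrite normrM; apply: ler_wpM2l.
Qed.

End ExtendedSeminorms.

Section Continuity.
Variables (R : realType) (X : Type) (d : X -> X -> R).

Definition dnbhs (x : X) : set_system X :=
  filter_from [set e : R | 0 < e] (fun e => [set y | d x y < e]).

Global Instance dnbhs_filter x : Filter (dnbhs x).
Proof.
apply: filter_from_filter; first by exists 1; rewrite /= ltr01.
move=> i j i_gt0 j_gt0; exists (Num.min i j); first by rewrite /= lt_min i_gt0.
by move=> y /=; rewrite lt_min => /andP[].
Qed.

Lemma dcontinuousP f : dcontinuous d f <-> forall x, f @ dnbhs x --> f x.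
Proof.
split=> fc x.
- apply/cvgrPdist_lt => e e_gt0; have [del del_gt0 Hdel] := fc x e e_gt0.
  by exists del => // y /Hdel; rewrite distrC.
- move=> e e_gt0; have [del del_gt0 Hdel] := (cvgrPdist_lt _ _).1 (fc x) e e_gt0.
  by exists del => // y /Hdel; rewrite distrC.
Qed.

Lemma CX_cst c : CX d (fun _ => c).
Proof. by apply/dcontinuousP => x; exact: cvg_cst. Qed.

Lemma CX_add f g : CX d f -> CX d g -> CX d (fun x => f x + g x).
Proof.
by move=> /dcontinuousP fc /dcontinuousP gc; apply/dcontinuousP => x; exact: cvgD.
Qed.

Lemma CX_sub f g : CX d f -> CX d g -> CX d (fun x => f x - g x).
Proof.
by move=> /dcontinuousP fc /dcontinuousP gc; apply/dcontinuousP => x; exact: cvgB.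
Qed.

Lemma CX_scale a f : CX d f -> CX d (fun x => a * f x).
Proof.
by move=> /dcontinuousP fc; apply/dcontinuousP => x; apply: cvgM => //; exact: cvg_cst.
Qed.

Lemma CX_lin_closed : lin_closed (CX d).
Proof. by move=> a u v Cu Cv; exact: CX_add (CX_scale a Cu) Cv. Qed.

End Continuity.

Section Metric.
Variables (R : realType) (X : Type) (d : X -> X -> R).
Hypothesis hm : is_metric d.

Let d_ge0 x y : 0 <= d x y. Proof. by case: hm. Qed.
Let d_xx x : d x x = 0. Proof. by case: hm => _ dP _ _; apply/dP. Qed.
Let d_sym x y : d x y = d y x. Proof. by case: hm. Qed.
Let d_tri x y z : d x z <= d x y + d y z. Proof. by case: hm. Qed.

Lemma sub_enlarge (B : set X) (del : R) : 0 < del -> B `<=` enlarge d B del.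
Proof. by move=> del_gt0 x Bx; exists x; rewrite ?d_xx. Qed.

Definition dist_to (A : set X) (x : X) : R := inf [set d x a | a in A].

Lemma dist_to_ge0 A x : A !=set0 -> 0 <= dist_to A x.
Proof.
case=> a Aa; apply: lb_le_inf; first by exists (d x a), a.
by move=> _ [b _ <-].
Qed.

Lemma dist_to_le A x a : A a -> dist_to A x <= d x a.
Proof.
move=> Aa; apply: ge_inf; last by exists a.
by exists 0 => _ [b _ <-].
Qed.

Lemma dist_to_lip A x y : A !=set0 -> dist_to A x <= d x y + dist_to A y.
Proof.
case=> a Aa; rewrite -lerBlDl; apply: lb_le_inf; first by exists (d y a), a.
move=> _ [b Ab <-]; rewrite lerBlDl.
exact: le_trans (dist_to_le x Ab) (d_tri x y b).
Qed.

Lemma dist_to_eq0 A x : A x -> dist_to A x = 0.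
Proof.
move=> Ax; apply/le_anti; rewrite dist_to_ge0 ?andbT; last by exists x.
by rewrite -(d_xx x); exact: dist_to_le.
Qed.

Lemma dclosed_dist_to_le0 A x : dclosed d A -> A !=set0 -> dist_to A x <= 0 -> A x.
Proof.
move=> Acl [a Aa] dx0; apply: Acl => del del_gt0.
have /inf_lt[|_ [b Ab <-] ?] : dist_to A x < del by exact: le_lt_trans del_gt0.
  by exists (d x a), a.
by exists b.
Qed.

Lemma dist_to_continuous A : A !=set0 -> dcontinuous d (dist_to A).
Proof.
move=> A0 x e e_gt0; exists e => // y dxy.
have := dist_to_lip x y A0; have := dist_to_lip y x A0; rewrite (d_sym y x).
by rewrite ltr_norml => ? ?; apply/andP; split; lra.
Qed.

Lemma metric_urysohn (A C : set X) : dclosed d A -> dclosed d C ->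
  A !=set0 -> C !=set0 -> A `&` C = set0 ->
  exists g, [/\ CX d g, forall x, 0 <= g x <= 1,
    forall x, A x -> g x = 0 & forall x, C x -> g x = 1].
Proof.
move=> Acl Ccl A0 C0 AC.
have sum_gt0 x : 0 < dist_to A x + dist_to C x.
  rewrite ltNge; apply/negP => s_le0.
  have dA := dist_to_ge0 x A0; have dC := dist_to_ge0 x C0.
  suff : (A `&` C) x by rewrite AC.
  by split; apply: dclosed_dist_to_le0 => //; lra.
have dAc := (dcontinuousP d _).1 (dist_to_continuous A0).
have dCc := (dcontinuousP d _).1 (dist_to_continuous C0).
exists (fun x => dist_to A x / (dist_to A x + dist_to C x)); split.
- apply/dcontinuousP => x; apply: cvgM; first exact: dAc.
  by apply: cvgV; [rewrite gt_eqF | exact: cvgD].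
- move=> x; have s_gt0 := sum_gt0 x.
  have dA := dist_to_ge0 x A0; have dC := dist_to_ge0 x C0.
  apply/andP; split; first by rewrite divr_ge0 // ltW.
  by rewrite ler_pdivrMr // mul1r lerDl.
- by move=> x Ax; rewrite dist_to_eq0 // mul0r.
- move=> x Cx; have := sum_gt0 x.
  by rewrite (dist_to_eq0 Cx) addr0 => dA_gt0; rewrite divff // gt_eqF.
Qed.

End Metric.

Lemma list_choice (A B : Type) (P : B -> Prop) (Q : A -> B -> Prop) (J : seq A) :
  (forall a, List.In a J -> exists2 b, P b & Q a b) ->
  exists J' : seq B, (forall b, List.In b J' -> P b) /\
    (forall a, List.In a J -> exists2 b, List.In b J' & Q a b).
Proof.
elim: J => [|a J IH] JPQ; first by exists [::]; split.
have [|J' [J'P J'Q]] := IH; first by move=> a' Ja'; apply: JPQ; right.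
have [b Pb Qab] := JPQ a (or_introl erefl).
exists (b :: J'); split; first by move=> b' [<-|/J'P].
move=> a' [<-|/J'Q [b' J'b' Qb']]; first by exists b; [left|].
by exists b'; [right|].
Qed.

Section Topologies.
Variables (R : realType) (X : Type) (d : X -> X -> R).
Implicit Types (N : set ((X -> R) -> \bar R)) (B : set X).

Definition dominates (q p : (X -> R) -> \bar R) :=
  forall k (e : R), CX d k -> (q k < e%:E)%E -> (p k < e%:E)%E.

Lemma induced_top_sub N1 N2 :
  (forall p, N1 p -> exists2 q, N2 q & dominates q p) ->
  induced_top d N1 `<=` induced_top d N2.
Proof.
move=> N2dom U [UC HU]; split=> // f0 Uf0.
have [J [JN1 [e e_gt0 HJ]]] := HU f0 Uf0.
have [J' [J'N2 J'dom]] := list_choice (fun p Jp => N2dom p (JN1 p Jp)).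
exists J'; split => //; exists e => // g Cg J'g; apply: HJ => // p /J'dom [q J'q].
by apply; [exact: CX_sub Cg (UC _ Uf0) | exact: J'g].
Qed.

Lemma induced_top_ball N p : N p ->
  (forall f g (r s : R), CX d f -> CX d g -> (p f < r%:E)%E -> (p g < s%:E)%E ->
     (p (fun x => f x + g x)%R < (r + s)%R%:E)%E) ->
  induced_top d N [set f | CX d f /\ (p f < 1%:E)%E].
Proof.
move=> Np p_subadd; split=> [f []//|f0 [Cf0 pf0]].
have [r r_lt1 pf0r] : exists2 r : R, r < 1 & (p f0 < r%:E)%E.
  move: pf0; case: (p f0) => [s||] //; last by exists 0; rewrite ?ltr01 ?ltNyr.
  by rewrite lte_fin => s_lt1; exists ((s + 1) / 2); rewrite ?lte_fin; lra.
exists [:: p]; split; first by move=> q [<-|[]].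
exists (1 - r); first by rewrite subr_gt0.
move=> g Cg /(_ p (or_introl erefl)) pg; split => //.
have := p_subadd _ _ _ _ (CX_sub Cg Cf0) Cf0 pg pf0r.
by rewrite subrK; congr (p _ < _)%E; apply/funext => x; rewrite subrK.
Qed.

Lemma tau_B_sub_tau_Bs (B0 : set (set X)) :
  is_metric d -> tau_B d B0 `<=` tau_Bs d B0.
Proof.
move=> hm; apply: induced_top_sub => _ [B B0B <-].
exists (rho_s d B); first by exists B.
move=> k e _ /rho_s_ltP [del del_gt0 [r re Hr]]; apply/rho_ltP; exists r => // x Bx.
by apply: Hr; exact: sub_enlarge.
Qed.

Lemma dclosed_norm_ge k (c : R) : CX d k -> dclosed d [set x | c <= `|k x|].
Proof.
move=> Ck x near_x /=; rewrite leNgt; apply/negP => kx.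
have /(Ck x)[del del_gt0 Hdel] : 0 < c - `|k x| by rewrite subr_gt0.
have [a /= ca dxa] := near_x del del_gt0.
have := Hdel a dxa; have := ler_normD (k a - k x) (k x); rewrite subrK; lra.
Qed.

Lemma dclosedU A B : dclosed d A -> dclosed d B -> dclosed d (A `|` B).
Proof.
move=> Acl Bcl x near_x; apply: contrapT.
move=> /not_orP [/(contra_not (Acl x)) nAx /(contra_not (Bcl x)) nBx].
move/existsNP: nAx => [dA /not_implyP [dA_gt0 farA]].
move/existsNP: nBx => [dB /not_implyP [dB_gt0 farB]].
have /near_x [a [Aa|Ba]] : 0 < Num.min dA dB by rewrite lt_min dA_gt0.
- by rewrite lt_min => /andP[dxa _]; apply: farA; exists a.
- by rewrite lt_min => /andP[_ dxa]; apply: farB; exists a.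
Qed.

Lemma is_shieldS B A1 A2 : is_shield d B A1 -> A1 `<=` A2 -> is_shield d B A2.
Proof.
move=> [BA1 shA1] A1A2; split=> [x /BA1 /A1A2 //|C Ccl CA2]; apply: shA1 => //.
by apply/seteqP; split=> // x [Cx /A1A2 A2x]; rewrite -CA2.
Qed.

Lemma is_shield_subl B B' A1 : B `<=` B' -> is_shield d B' A1 -> is_shield d B A1.
Proof.
move=> BB' [B'A1 shA1]; split=> [x /BB' /B'A1 //|C Ccl CA1].
have [del del_gt0 CB'] := shA1 C Ccl CA1; exists del => //.
by apply/seteqP; split=> // x [Cx /(enlargeS BB') B'x]; rewrite -CB'.
Qed.

Lemma shield_dominates B A1 : is_shield d B A1 -> dominates (rho A1) (rho_s d B).
Proof.
move=> [_ shA1] k e Ck /rho_ltP [r re Hr].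
pose c := (r + e) / 2.
have /(shA1 _ (dclosed_norm_ge Ck))[del del_gt0 Hdel] :
    [set x | c <= `|k x|] `&` A1 = set0.
  by apply/seteqP; split=> // x [/= ckx /Hr kxr]; rewrite /c in ckx; lra.
apply/rho_s_ltP; exists del => //; exists c; first by rewrite /c; lra.
move=> x Ex; rewrite leNgt; apply/negP => ckx.
suff : ([set x | c <= `|k x|] `&` enlarge d B del) x by rewrite Hdel.
by split => //=; exact: ltW.
Qed.

Lemma shielded_tau_Bs_sub (Bor B0 : set (set X)) : closed_base d Bor B0 ->
  shielded_from_closed d Bor -> tau_Bs d B0 `<=` tau_B d B0.
Proof.
move=> [B0Bor cover _] shielded; apply: induced_top_sub => _ [B B0B <-].
have [A1 BorA1 shA1] := shielded B (B0Bor B B0B).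
have [B' B0B' A1B'] := cover A1 BorA1.
by exists (rho B'); [exists B' | exact: shield_dominates (is_shieldS shA1 A1B')].
Qed.

End Topologies.

Lemma finest_lc_unique (R : realType) (X : Type) (d : X -> X -> R) T TF TF' :
  finest_lc d T TF -> finest_lc d T TF' -> TF = TF'.
Proof.
by move=> [lc sub max] [lc' sub' max']; apply/seteqP; split; [exact: max' | exact: max].
Qed.

Section FiniteRhoS.
Variables (R : realType) (X : Type) (d : X -> X -> R) (B : set X).
Hypotheses (hm : is_metric d) (B_neq0 : B !=set0).

Definition Cfin : set (X -> R) := [set k | CX d k /\ (rho_s d B k < +oo)%E].

Local Notation rho_sR k := (fine (rho_s d B k)).

Lemma rho_s_ge0 k : (0 <= rho_s d B k)%E.
Proof.
rewrite leNgt; apply/negP => /rho_s_ltP [del del_gt0 [r r_lt0 Hr]].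
have [b Bb] := B_neq0; have := Hr b (sub_enlarge hm del_gt0 Bb).
by have := normr_ge0 (k b); lra.
Qed.

Lemma Cfin_fineK k : Cfin k -> (rho_sR k)%:E = rho_s d B k.
Proof. by case=> _ k_fin; rewrite fineK // ge0_fin_numE // rho_s_ge0. Qed.

Lemma rho_sR_ltP k (e : R) : Cfin k -> rho_sR k < e <-> (rho_s d B k < e%:E)%E.
Proof. by move=> Fk; rewrite -(Cfin_fineK Fk) lte_fin. Qed.

Lemma Cfin_of_bounded k (r : R) : CX d k -> (forall x, `|k x| <= r) -> Cfin k.
Proof.
move=> Ck kr; split => //; apply: lt_trans (ltry (r + 1)).
by apply: rho_s_lt_of_bounded kr _; rewrite ltrDl.
Qed.

Lemma Cfin_CX : Cfin `<=` CX d.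
Proof. by move=> k []. Qed.

Lemma Cfin0 : Cfin (fun _ => 0).
Proof. by apply: Cfin_of_bounded (CX_cst d 0) _ => x; rewrite normr0. Qed.

Lemma Cfin_add f g : Cfin f -> Cfin g -> Cfin (fun x => f x + g x).
Proof.
move=> Ff Fg; split; first exact: CX_add (Cfin_CX Ff) (Cfin_CX Fg).
have /(rho_sR_ltP _ Ff) fr : rho_sR f < rho_sR f + 1 by rewrite ltrDl.
have /(rho_sR_ltP _ Fg) gs : rho_sR g < rho_sR g + 1 by rewrite ltrDl.
exact: lt_trans (rho_s_ltD fr gs) (ltry _).
Qed.

Lemma Cfin_scale a f : Cfin f -> Cfin (fun x => a * f x).
Proof.
move=> Ff; have Cf := Cfin_CX Ff; have [->|a0] := eqVneq a 0.
  by apply: Cfin_of_bounded (CX_scale 0 Cf) _ => x; rewrite mul0r normr0.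
split; first exact: CX_scale.
have /(rho_sR_ltP _ Ff) fr : rho_sR f < rho_sR f + 1 by rewrite ltrDl.
exact: lt_trans (rho_s_ltZ a0 fr) (ltry _).
Qed.

Lemma Cfin_lin_closed : lin_closed Cfin.
Proof. by move=> a u v Fu Fv; exact: Cfin_add (Cfin_scale a Fu) Fv. Qed.

Lemma rho_sR_add f g : Cfin f -> Cfin g ->
  rho_sR (fun x => f x + g x) <= rho_sR f + rho_sR g.
Proof.
move=> Ff Fg; apply/ler_addgt0Pr => e e_gt0.
have /(rho_sR_ltP _ Ff) fe : rho_sR f < rho_sR f + e / 2 by rewrite ltrDl divr_gt0.
have /(rho_sR_ltP _ Fg) ge : rho_sR g < rho_sR g + e / 2 by rewrite ltrDl divr_gt0.
apply/ltW/(rho_sR_ltP _ (Cfin_add Ff Fg)); apply: lt_le_trans (rho_s_ltD fe ge) _.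
by rewrite lee_fin; lra.
Qed.

Lemma rho_sR_scale_le a f : a != 0 -> Cfin f ->
  rho_sR (fun x => a * f x) <= `|a| * rho_sR f.
Proof.
move=> a0 Ff; have a_gt0 : 0 < `|a| by rewrite normr_gt0.
apply/ler_addgt0Pr => e e_gt0; apply/ltW/(rho_sR_ltP _ (Cfin_scale a Ff)).
have /(rho_sR_ltP _ Ff) fe : rho_sR f < rho_sR f + e / `|a| by rewrite ltrDl divr_gt0.
by have := rho_s_ltZ a0 fe; rewrite mulrDr mulrCA divff ?gt_eqF // mulr1.
Qed.

Lemma rho_sR0 : rho_sR (fun _ => 0) = 0.
Proof.
apply/le_anti/andP; split; last by rewrite -lee_fin (Cfin_fineK Cfin0) rho_s_ge0.
apply/ler_addgt0Pr => e e_gt0; apply/ltW/(rho_sR_ltP _ Cfin0).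
by rewrite add0r; apply: rho_s_lt_of_bounded _ e_gt0 => x; rewrite normr0.
Qed.

Lemma rho_sR_scale a f : Cfin f -> rho_sR (fun x => a * f x) = `|a| * rho_sR f.
Proof.
move=> Ff; have [->|a0] := eqVneq a 0.
  have -> : (fun x => 0 * f x) = (fun _ => 0) by apply/funext => x; rewrite mul0r.
  by rewrite rho_sR0 normr0 mul0r.
apply/le_anti/andP; split; first exact: rho_sR_scale_le.
have := rho_sR_scale_le (invr_neq0 a0) (Cfin_scale a Ff).
have -> : (fun x => a^-1 * (a * f x)) = f by apply/funext => x; rewrite mulKf.
by rewrite normrV ?unitfE // ler_pdivlMl ?normr_gt0 // mulrC.
Qed.

Lemma seminorm_extending_rho_s :
  exists p, seminorm d p /\ forall k, Cfin k -> (p k)%:E = rho_s d B k.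
Proof.
have [pr [prF prK pr_lin]] :=
  linear_projection (@CX_lin_closed R X d) Cfin_lin_closed Cfin0 Cfin_CX.
have prD f g : CX d f -> CX d g ->
    pr (fun x => f x + g x) = fun x => pr f x + pr g x.
  by move=> Cf Cg; have := pr_lin 1 f g Cf Cg; rewrite !scale1r.
have prZ a f : CX d f -> pr (fun x => a * f x) = fun x => a * pr f x.
  by move=> Cf; have := pr_lin a f 0 Cf (CX_cst d 0); rewrite (prK _ Cfin0) !addr0.
exists (fun f => rho_sR (pr f)); split; first split.
- by move=> a f Cf; rewrite prZ //; apply: rho_sR_scale; exact: prF.
- by move=> f g Cf Cg; rewrite prD //; apply: rho_sR_add; exact: prF.
- by move=> k Fk; rewrite prK //; exact: Cfin_fineK.
Qed.

End FiniteRhoS.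

Section Unshielded.
Variables (R : realType) (X : Type) (d : X -> X -> R) (Bor B0 : set (set X)).
Hypotheses (hm : is_metric d) (hBor : bornology Bor) (hB0 : closed_base d Bor B0).

Let base_neq0 B : B0 B -> B !=set0.
Proof. by case: hBor => Bor_neq0 _ _ _; case: hB0 => B0Bor _ _ /B0Bor /Bor_neq0. Qed.

Lemma not_shielded_base : ~ shielded_from_closed d Bor ->
  exists2 B1, B0 B1 & forall A1, Bor A1 -> ~ is_shield d B1 A1.
Proof.
have [_ cover _] := hB0; move=> not_shielded; apply: contrapT => no_B1.
apply: not_shielded => B BorB; have [B1 B0B1 BB1] := cover B BorB.
have [A1 BorA1 shA1] : exists2 A1, Bor A1 & is_shield d B1 A1.
  apply: contrapT => no_A1; apply: no_B1; exists B1 => // A1 BorA1 shA1.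
  by apply: no_A1; exists A1.
by exists A1 => //; exact: is_shield_subl shA1.
Qed.

Lemma not_shield_far_closed B A : ~ is_shield d B A -> B `<=` A ->
  exists C, [/\ dclosed d C, C `&` A = set0 &
    forall del, 0 < del -> exists2 x, C x & enlarge d B del x].
Proof.
move=> not_shield BA; apply: contrapT => no_C; apply: not_shield; split => // C Ccl CA.
apply: contrapT => no_del; apply: no_C; exists C; split => // del del_gt0.
apply: contrapT => no_x; apply: no_del; exists del => //.
by apply/seteqP; split => // x [Cx Ex]; apply: no_x; exists x.
Qed.

Lemma tau_B_nbhs0_vanishing B1 U : B0 B1 -> tau_B d B0 U -> U (fun _ => 0) ->
  exists A, [/\ Bor A, dclosed d A, B1 `<=` A &
    forall g, CX d g -> (forall x, A x -> g x = 0) -> U g].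
Proof.
have [_ _ BorU _] := hBor; have [B0Bor _ B0cl] := hB0.
move=> B0B1 [_ HU] /HU [J [JB0 [e e_gt0 HJ]]].
suff [A [BorA Acl B1A JA]] : exists A, [/\ Bor A, dclosed d A, B1 `<=` A &
    forall p, List.In p J -> exists2 A', A' `<=` A & p = rho A'].
  exists A; split => // g Cg gA; apply: HJ => // p /JA [A' A'A ->].
  by apply/rho_ltP; exists 0 => // x /A'A /gA ->; rewrite subr0 normr0.
elim: J JB0 {HJ} => [|p J IH] JB0.
  by exists B1; split => //; [exact: B0Bor | exact: B0cl].
have [|A [BorA Acl B1A JA]] := IH; first by move=> q Jq; apply: JB0; right.
have [A' B0A' <-] := JB0 p (or_introl erefl).
exists (A `|` A'); split.
- exact: BorU BorA (B0Bor _ B0A').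
- exact: dclosedU Acl (B0cl _ B0A').
- by move=> x /B1A; left.
- move=> q [<-|Jq]; first by exists A' => // x; right.
  by have [A'' A''A ->] := JA q Jq; exists A'' => // x /A''A; left.
Qed.

Lemma unshielded_not_tau_B B1 U : B0 B1 ->
  (forall A1, Bor A1 -> ~ is_shield d B1 A1) -> U (fun _ => 0) ->
  (forall g, U g -> CX d g -> (forall x, 0 <= g x <= 1) ->
     (rho_s d B1 g < 1%:E)%E) ->
  ~ tau_B d B0 U.
Proof.
move=> B0B1 no_shield U0 U_ball tU.
have [A [BorA Acl B1A Avan]] := tau_B_nbhs0_vanishing B0B1 tU U0.
have [C [Ccl CA Cnear]] := not_shield_far_closed (no_shield A BorA) B1A.
have A0 : A !=set0 by have [b B1b] := base_neq0 B0B1; exists b; exact: B1A.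
have C0 : C !=set0 by have [x Cx _] := Cnear 1 ltr01; exists x.
have AC : A `&` C = set0 by rewrite setIC.
have [g [Cg g01 gA gC]] := metric_urysohn hm Acl Ccl A0 C0 AC.
have /rho_s_ltP [del del_gt0 [r r_lt1 Hr]] := U_ball g (Avan g Cg gA) Cg g01.
have [x Cx Ex] := Cnear del del_gt0.
by have := Hr x Ex; rewrite gC // normr1; lra.
Qed.

Lemma shielded_of_tau_Bs_sub :
  tau_Bs d B0 `<=` tau_B d B0 -> shielded_from_closed d Bor.
Proof.
move=> sub; apply: contrapT => /not_shielded_base [B1 B0B1 no_shield].
have ball : tau_Bs d B0 [set f | CX d f /\ (rho_s d B1 f < 1%:E)%E].
  by apply: induced_top_ball; [exists B1 | move=> *; exact: rho_s_ltD].
apply: unshielded_not_tau_B B0B1 no_shield _ _ (sub _ ball).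
- by split; [exact: CX_cst | apply: rho_s_lt_of_bounded ltr01 => x; rewrite normr0].
- by move=> g [].
Qed.

Lemma shielded_of_finest_lc_sub tFs : finest_lc d (tau_Bs d B0) tFs ->
  tFs `<=` tau_B d B0 -> shielded_from_closed d Bor.
Proof.
move=> [_ _ maxFs] sub; apply: contrapT => /not_shielded_base [B1 B0B1 no_shield].
have [p [p_semi p_rho]] := seminorm_extending_rho_s hm (base_neq0 B0B1).
have [_ p_subadd] := p_semi.
pose S := induced_top d [set (fun f => (q f)%:E) | q in [set p]].
have S_tFs : S `<=` tFs.
  apply: maxFs; first by exists [set p]; split => // q ->.
  apply: induced_top_sub => _ [q -> <-]; exists (rho_s d B1); first by exists B1.
  by move=> k e Ck rk; rewrite p_rho //; split => //; exact: lt_trans rk (ltry _).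
have ball : S [set f | CX d f /\ ((p f)%:E < 1%:E)%E].
  apply: induced_top_ball; first by exists p.
  move=> f g r s Cf Cg; rewrite !lte_fin => pf pg.
  exact: le_lt_trans (p_subadd f g Cf Cg) (ltrD pf pg).
have bounded_Cfin g : CX d g -> (forall x, 0 <= g x <= 1) -> Cfin d B1 g.
  move=> Cg g01; apply: (Cfin_of_bounded B1 (r := 1) Cg) => x.
  by have /andP[g0 g1] := g01 x; rewrite ger0_norm.
apply: unshielded_not_tau_B B0B1 no_shield _ _ (sub _ (S_tFs _ ball)).
- split; first exact: CX_cst.
  rewrite (p_rho _ (Cfin0 d B1)).
  by apply: rho_s_lt_of_bounded ltr01 => x; rewrite normr0.
- by move=> g [_ pg] Cg g01; rewrite -p_rho //; exact: bounded_Cfin.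
Qed.

End Unshielded.

Theorem theorem3p15 (R : realType) (X : Type) (d : X -> X -> R)
  (Bor B0 : set (set X)) (tF tFs : set (set (X -> R))) :
  is_metric d -> bornology Bor -> closed_base d Bor B0 ->
  finest_lc d (tau_B d B0) tF -> finest_lc d (tau_Bs d B0) tFs ->
  (tF = tFs <-> tau_B d B0 = tau_Bs d B0) /\
  (tau_B d B0 = tau_Bs d B0 <-> shielded_from_closed d Bor).
Proof.
move=> hm hBor hB0 hF hFs.
have iii_ii : shielded_from_closed d Bor -> tau_B d B0 = tau_Bs d B0.
  move=> shielded; apply/seteqP; split; first exact: tau_B_sub_tau_Bs.
  exact: shielded_tau_Bs_sub hB0 shielded.
have ii_iii : tau_B d B0 = tau_Bs d B0 -> shielded_from_closed d Bor.
  by move=> eq_tau; apply: shielded_of_tau_Bs_sub hm hBor hB0 _; rewrite eq_tau.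
split; split => [eq_tF|eq_tau].
- apply/iii_ii/(shielded_of_finest_lc_sub hm hBor hB0 hFs).
  by rewrite -eq_tF; case: hF.
- by apply: finest_lc_unique hF _; rewrite eq_tau.
- exact: ii_iii.
- exact: iii_ii.
Qed.
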